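(* Let $q$ be a prime power with $q\not\equiv0\pmod3$. The line $L_c$ of $\mathrm{PG}(3,q)$ through $\mathbf{P}(1,0,0,1)$ and $\mathbf{P}(0,0,1,0)$ is an $\mathcal{E}_{nG}$-line.
   Context: Points of $\mathrm{PG}(3,q)$ are written $\mathbf{P}(x_0,x_1,x_2,x_3)$ over $\mathbb{F}_q$. For $t$ in $\mathbb{F}_q$ or in $\mathbb{F}_{q^2}$, put $P(t)=\mathbf{P}(t^3,t^2,t,1)$ and $P(\infty)=\mathbf{P}(1,0,0,0)$; the twisted cubic is $\mathscr{C}=\{P(t):t\in\mathbb{F}_q\cup\{\infty\}\}$. The osculating plane $\pi_{osc}(t)$ is the plane $x_0-3tx_1+3t^2x_2-t^3x_3=0$ for finite $t$, and $\pi_{osc}(\infty)$ is $x_3=0$. An imaginary chord is a line of $\mathrm{PG}(3,q)$ joining $P(t_1)$ and $P(t_2)$ for conjugate $t_1,t_2=t_1^q\in\mathbb{F}_{q^2}\setminus\mathbb{F}_q$; an imaginary axis is a line of $\mathrm{PG}(3,q)$ equal to $\pi_{osc}(t_1)\cap\pi_{osc}(t_2)$ for conjugate $t_1,t_2\in\mathbb{F}_{q^2}\setminus\mathbb{F}_q$. An $\mathcal{E}_{nG}$-line is a line of $\mathrm{PG}(3,q)$ having no point on $\mathscr{C}$, not contained in any osculating plane $\pi_{osc}(t)$, $t\in\mathbb{F}_q\cup\{\infty\}$, and which is neither an imaginary chord nor an imaginary axis. *)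

From HB Require Import structures.
From mathcomp Require Import all_boot all_order all_algebra all_field.
Set Implicit Arguments. Unset Strict Implicit. Unset Printing Implicit Defensive.
Import GRing.Theory.
Local Open Scope ring_scope.

(* Points of PG(3,.) are nonzero row vectors (x0,x1,x2,x3) up to scalars;
   a line of PG(3,q) is the row space of a rank-2 matrix L : 'M[F]_(2,4). *)

Definition Pt (R : nzRingType) (t : R) : 'rV[R]_4 :=
  \row_(j < 4) [:: t ^+ 3; t ^+ 2; t; 1]`_j.
Definition Pinf (R : nzRingType) : 'rV[R]_4 :=
  \row_(j < 4) [:: 1; 0; 0; 0]`_j.

(* Coefficient column of the osculating plane x0 - 3t x1 + 3t^2 x2 - t^3 x3 = 0 *)
Definition osc (R : nzRingType) (t : R) : 'cV[R]_4 :=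
  \col_(i < 4) [:: 1; - (3%:R * t); 3%:R * t ^+ 2; - t ^+ 3]`_i.
Definition osc_inf (R : nzRingType) : 'cV[R]_4 :=
  \col_(i < 4) [:: 0; 0; 0; 1]`_i.

Section Lines.
Variables (F K : finFieldType) (iota : {rmorphism F -> K}).

Definition is_line (L : 'M[F]_(2,4)) : Prop := \rank L = 2%N.

Definition meets_cubic (L : 'M[F]_(2,4)) : Prop :=
  (Pinf F <= L)%MS \/ exists t : F, (Pt t <= L)%MS.

Definition in_osc_plane (L : 'M[F]_(2,4)) : Prop :=
  L *m osc_inf F = 0 \/ exists t : F, L *m osc t = 0.

(* t lies in F_{q^2} \ F_q (K plays F_{q^2}, embedded via iota) *)
Definition imaginary (t : K) : Prop := forall a : F, iota a <> t.

Definition conjq (t : K) : K := t ^+ #|F|.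

(* L is the imaginary chord P(t1)P(t2), t2 = t1^q: its extension to K is the join *)
Definition imaginary_chord (L : 'M[F]_(2,4)) : Prop :=
  exists t : K, imaginary t /\
    (map_mx iota L == col_mx (Pt t) (Pt (conjq t)))%MS.

(* L is the imaginary axis pi_osc(t1) \cap pi_osc(t2), t2 = t1^q:
   its extension to K equals the common solution space of the two planes *)
Definition imaginary_axis (L : 'M[F]_(2,4)) : Prop :=
  exists t : K, imaginary t /\
    (map_mx iota L == kermx (row_mx (osc t) (osc (conjq t))))%MS.

Definition EnG_line (L : 'M[F]_(2,4)) : Prop :=
  [/\ is_line L, ~ meets_cubic L, ~ in_osc_plane L,
      ~ imaginary_chord L & ~ imaginary_axis L].

End Lines.

Definition Lc (F : nzRingType) : 'M[F]_(2,4) :=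
  col_mx (\row_(j < 4) [:: 1; 0; 0; 1]`_j) (\row_(j < 4) [:: 0; 0; 1; 0]`_j).

From HB Require Import structures.
From mathcomp Require Import all_boot all_order all_algebra all_field.
Set Implicit Arguments.
Unset Strict Implicit.
Unset Printing Implicit Defensive.
Import GRing.Theory.
Local Open Scope ring_scope.

(* Every point of L_c satisfies x1 = 0 and x0 = x3, which no point P(t) or
   P(oo) does, over any field.  The plane x0 - 3t x1 + 3t^2 x2 - t^3 x3 = 0
   contains L_c only if 1 - t^3 = 0 and 3t^2 = 0, impossible when 3 != 0;
   x3 = 0 misses P(1,0,0,1).  Since these arguments work over F_{q^2} as well,
   L_c is neither a chord nor an axis even for non-conjugate parameters. *)

Lemma pchar_dvdn_card (R : finNzRingType) p : p \in [pchar R] -> (p %| #|R|)%N.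
Proof.
move=> pcharR; have cardR : #|R| = (p ^ logn p #|R|)%N := card_pprimeChar pcharR.
move: (card_finNzRing_gt1 R); rewrite cardR.
by case: (logn p #|R|) => [|n]; rewrite ?expn0 // expnS dvdn_mulr.
Qed.

Lemma LcE (R : nzRingType) (i : 'I_2) (j : 'I_4) :
  Lc R i j = if i == 0 then [:: 1; 0; 0; 1]`_j else [:: 0; 0; 1; 0]`_j.
Proof.
rewrite /Lc; set r1 := \row_j _; set r2 := \row_j _.
case: i => [[|[|//]] lt_i2].
  have -> : Ordinal lt_i2 = lshift 1 (0 : 'I_1) by apply: val_inj.
  by rewrite (col_mxEu r1 r2) mxE.
have -> : Ordinal lt_i2 = rshift 1 (0 : 'I_1) by apply: val_inj.
by rewrite (col_mxEd r1 r2) mxE.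
Qed.

Lemma rank_Lc (R : fieldType) : \rank (Lc R) = 2%N.
Proof.
apply/eqP; apply/row_freeP.
(* columns 0 and 2 of L_c form the identity matrix *)
exists (\matrix_(i < 4, j < 2)
          ((i == 0 :> nat) && (j == 0 :> nat) || (i == 2 :> nat) && (j == 1 :> nat))%:R).
apply/matrixP => i j; rewrite !mxE !big_ord_recl !big_ord0 !LcE !mxE.
by case: i => [[|[|//]] ?]; case: j => [[|[|//]] ?]; rewrite /= ?mul0r ?mul1r ?add0r ?addr0.
Qed.

Lemma map_Lc (F K : nzRingType) (iota : {rmorphism F -> K}) :
  map_mx iota (Lc F) = Lc K.
Proof.
apply/matrixP => i j; rewrite mxE !LcE.
by case: (i == 0); case: j => [[|[|[|[|//]]]] ?]; rewrite /= ?rmorph0 ?rmorph1.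
Qed.

Lemma sub_Lc (R : fieldType) (w : 'rV[R]_4) :
  (w <= Lc R)%MS -> w 0 1 = 0 /\ w 0 0 = w 0 3.
Proof.
case/submxP => D ->; rewrite !mxE !big_ord_recl !big_ord0 !LcE /=.
by rewrite !mulr0 !mulr1 !addr0.
Qed.

Lemma Lc_mul_col_eq0 (R : nzRingType) (s : seq R) :
  Lc R *m \col_(i < 4) s`_i = 0 -> s`_0 + s`_3 = 0 /\ s`_2 = 0.
Proof.
move/matrixP=> Lcs0; move: (Lcs0 0 0) (Lcs0 1 0).
rewrite !mxE !big_ord_recl !big_ord0 !LcE !mxE /= !mul0r !mul1r !add0r !addr0.
by move=> ? ?; split.
Qed.

Lemma Pinf_notin_Lc (R : fieldType) : ~ (Pinf R <= Lc R)%MS.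
Proof. by case/sub_Lc => _; rewrite !mxE /=; apply/eqP; rewrite oner_eq0. Qed.

Lemma Pt_notin_Lc (R : fieldType) (t : R) : ~ (Pt t <= Lc R)%MS.
Proof.
case/sub_Lc; rewrite !mxE /= => /eqP; rewrite sqrf_eq0 => /eqP ->.
by rewrite expr0n; apply/eqP; rewrite eq_sym oner_eq0.
Qed.

Lemma Lc_osc_neq0 (R : idomainType) (t : R) : 3%:R != 0 :> R -> Lc R *m osc t <> 0.
Proof.
move=> three_neq0 /Lc_mul_col_eq0[/= one_sub_t3 /eqP].
rewrite mulf_eq0 (negbTE three_neq0) sqrf_eq0 => /eqP t0.
by move: one_sub_t3; rewrite t0 expr0n oppr0 addr0; apply/eqP; rewrite oner_eq0.
Qed.

Lemma Lc_osc_inf_neq0 (R : nzRingType) : Lc R *m osc_inf R <> 0.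
Proof. by case/Lc_mul_col_eq0 => /= /eqP; rewrite add0r oner_eq0. Qed.

Lemma Lc_neq_chord (R : fieldType) (t u : R) : ~ (Lc R == col_mx (Pt t) (Pt u))%MS.
Proof. by case/andP=> _; rewrite col_mx_sub => /andP[/Pt_notin_Lc]. Qed.

Lemma Lc_neq_axis (R : fieldType) (t u : R) :
  3%:R != 0 :> R -> ~ (Lc R == kermx (row_mx (osc t) (osc u)))%MS.
Proof.
move=> three_neq0 /andP[/sub_kermxP]; rewrite mul_mx_row => /eqP.
by rewrite row_mx_eq0 => /andP[/eqP/(Lc_osc_neq0 three_neq0)].
Qed.

Theorem lemma3p1 (F K : finFieldType) (iota : {rmorphism F -> K})
  (hK : #|K| = (#|F| ^ 2)%N) (hq : (#|F| %% 3 != 0)%N) :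
  EnG_line iota (Lc F).
Proof.
have three_neq0F : 3%:R != 0 :> F.
  by apply: contra hq => three0; apply: (@pchar_dvdn_card F); rewrite inE.
have three_neq0K : 3%:R != 0 :> K by rewrite -(rmorph_nat iota) fmorph_eq0.
split.
- exact: rank_Lc.
- by case=> [/Pinf_notin_Lc | [t /Pt_notin_Lc]].
- by case=> [/Lc_osc_inf_neq0 | [t /(Lc_osc_neq0 three_neq0F)]].
- by case=> t [_]; rewrite map_Lc => /Lc_neq_chord.
- by case=> t [_]; rewrite map_Lc => /(Lc_neq_axis three_neq0K).
Qed.
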